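(* Let $G$ be an infinite, connected, locally finite graph, let $S$ be a finite resolving set of $G$, and let $\mathcal P$ be a set of metric rays of $G$ whose vertex sets are pairwise disjoint. For each $P\in\mathcal P$ with ordered vertex set $\{u_0,u_1,\dots\}$, let $u^P$ denote the vertex $u_{i(P,S)}$ of $P$. Then $S$ doubly resolves the set $\{u^P: P\in\mathcal P\}$.
   Context: $d$ denotes shortest-path distance in $G$. A vertex $x$ resolves $u,v$ if $d(u,x)\ne d(v,x)$; $S$ is a resolving set if every pair of distinct vertices is resolved by some vertex of $S$. For a finite ordered set $S=\{x_1,\dots,x_n\}$, $r(u\mid S)=(d(u,x_1),\dots,d(u,x_n))$. A metric ray of $G$ with endpoint $u_0$ is an infinite subgraph $P$ whose vertices admit an ordering $u_0,u_1,u_2,\dots$ (all distinct) with $u_k$ adjacent to $u_{k+1}$ in $P$ and $d_G(u_0,u_k)=k$ for all $k\ge 0$. For a finite set $S$ and a metric ray $P$, $i(P,S)$ is the minimum integer $i_0\ge0$ such that $r(u_{i_0+k}\mid S)=r(u_{i_0}\mid S)+(k,\dots,k)$ for every $k\ge 0$ (such an $i_0$ always exists). Two vertices $x,y$ doubly resolve a pair $u,v$ if $d(u,x)-d(v,x)\ne d(u,y)-d(v,y)$; $S$ doubly resolves a set $U$ if every pair of distinct vertices of $U$ is doubly resolved by some two vertices of $S$. *)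

From Stdlib Require Import Arith ZArith List ClassicalEpsilon.
Import ListNotations.

Section Graphs.
Context {V : Type} (adj : V -> V -> Prop).

Definition simple_graph : Prop :=
  (forall u v, adj u v -> adj v u) /\ (forall u, ~ adj u u).

Inductive walk : V -> V -> nat -> Prop :=
  | walk_nil : forall u, walk u u 0
  | walk_cons : forall u w v n, adj u w -> walk w v n -> walk u v (S n).

Definition connected : Prop := forall u v, exists n, walk u v n.

Definition locally_finite : Prop :=
  forall v, exists l : list V, forall w, adj v w -> In w l.

Definition infinite_graph : Prop := ~ exists l : list V, forall v, In v l.

(* shortest-path distance (meaningful when G is connected) *)
Definition dist (u v : V) : nat :=
  epsilon (inhabits 0%nat)
    (fun n => walk u v n /\ forall m, walk u v m -> (n <= m)%nat).

Definition resolving_set (S : list V) : Prop :=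
  forall u v, u <> v -> exists x, In x S /\ dist u x <> dist v x.

Definition metric_ray (u : nat -> V) : Prop :=
  (forall k l, u k = u l -> k = l) /\
  (forall k, adj (u k) (u (S k))) /\
  (forall k, dist (u 0%nat) (u k) = k).

Definition ray_stable (S : list V) (u : nat -> V) (i0 : nat) : Prop :=
  forall k x, In x S -> dist (u (i0 + k)%nat) x = (dist (u i0) x + k)%nat.

Definition ray_index (S : list V) (u : nat -> V) : nat :=
  epsilon (inhabits 0%nat)
    (fun i0 => ray_stable S u i0 /\ forall j, ray_stable S u j -> (i0 <= j)%nat).

Definition doubly_resolves_pair (x y u v : V) : Prop :=
  (Z.of_nat (dist u x) - Z.of_nat (dist v x) <>
   Z.of_nat (dist u y) - Z.of_nat (dist v y))%Z.

Definition doubly_resolves (S : list V) (U : V -> Prop) : Prop :=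
  forall u v, U u -> U v -> u <> v ->
    exists x y, In x S /\ In y S /\ doubly_resolves_pair x y u v.

End Graphs.

(* Along a metric ray u_0, u_1, ... the distance to a fixed vertex
   x grows by at most one per step and at least as fast as k - d(u_0,x), so the
   function k |-> d(u_k,x) - k is non-increasing and bounded below; hence it is
   eventually constant, i.e. d(u_{K+k},x) = d(u_K,x) + k from some K on.  Doing
   this for every vertex of the finite set S shows that the index i(P,S) exists
   and that u^P satisfies the stability equation r(u^P_{+k}|S) = r(u^P|S)+k.
   Now suppose S does not doubly resolve u^P and u^Q.  Then d(u^P,x) - d(u^Q,x)
   is a constant c for all x in S, say c >= 0.  By stability of Q the vertex
   u^Q_{+c} has the same distance vector to S as u^P, so, S being resolving, it
   equals u^P; this contradicts the disjointness of the rays P and Q. *)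
From Stdlib Require Import Arith ZArith List Lia Classical ClassicalEpsilon.

Lemma nat_least_witness (P : nat -> Prop) :
  (exists n, P n) -> exists n, P n /\ forall m, P m -> n <= m.
Proof.
  intros [n Hn]; revert Hn.
  induction n as [n IH] using (well_founded_induction lt_wf); intros Hn.
  destruct (classic (exists m, P m /\ m < n)) as [[m [Pm Hm]] | Hnone].
  - exact (IH m Hm Pm).
  - exists n; split; [exact Hn |].
    intros m Pm; destruct (le_lt_dec n m) as [Hle | Hlt]; [exact Hle |].
    exfalso; apply Hnone; eauto.
Qed.

(* A function of slope at most one which grows at least linearly (up to a
   constant) eventually has slope exactly one: k |-> f k - k is a
   non-increasing integer sequence bounded below, hence eventually constant. *)
Lemma eventually_unit_slope (f : nat -> nat) (C : nat) :
  (forall k, f (S k) <= f k + 1) ->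
  (forall k, k <= C + f k) ->
  exists K, forall k, f (K + k) = f K + k.
Proof.
  intros Hstep Hlow.
  assert (Hmono : forall K k, f (K + k) <= f K + k).
  { intros K k; induction k as [|k IH]; [rewrite Nat.add_0_r; lia |].
    rewrite Nat.add_succ_r; specialize (Hstep (K + k)); lia. }
  assert (Hdesc : forall m K, C + f K - K <= m ->
                  exists K', forall k, f (K' + k) = f K' + k).
  { induction m as [m IH] using (well_founded_induction lt_wf); intros K HK.
    destruct (classic (forall k, f (K + k) = f K + k)) as [Hstable | Hnot];
      [exists K; exact Hstable |].
    apply not_all_ex_not in Hnot as [k Hk].
    apply (IH (C + f (K + k) - (K + k))) with (K := K + k); [| lia].
    pose proof (Hmono K k); pose proof (Hlow (K + k)); pose proof (Hlow K).
    lia. }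
  exact (Hdesc _ 0 (le_n _)).
Qed.

Lemma not_doubly_resolved_constant {V : Type} (adj : V -> V -> Prop)
  (S : list V) (a b x0 : V) :
  ~ (exists x y, In x S /\ In y S /\ doubly_resolves_pair adj x y a b) ->
  In x0 S ->
  forall x, In x S ->
    (Z.of_nat (dist adj a x) - Z.of_nat (dist adj b x) =
     Z.of_nat (dist adj a x0) - Z.of_nat (dist adj b x0))%Z.
Proof.
  intros Hno Hx0 x Hx; apply NNPP; intro Hne.
  apply Hno; exists x, x0; unfold doubly_resolves_pair; auto.
Qed.

Lemma doubly_resolves_pair_sym {V : Type} (adj : V -> V -> Prop) (x y a b : V) :
  doubly_resolves_pair adj x y a b -> doubly_resolves_pair adj x y b a.
Proof. unfold doubly_resolves_pair; lia. Qed.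

Section Metric.
Context {V : Type} (adj : V -> V -> Prop).
Hypothesis adj_sym : forall u v, adj u v -> adj v u.
Hypothesis conn : connected adj.

Lemma walk_app u v n :
  walk adj u v n -> forall w m, walk adj v w m -> walk adj u w (n + m).
Proof. induction 1; intros; simpl; [assumption | econstructor; eauto]. Qed.

Lemma walk_rev u v n : walk adj u v n -> walk adj v u n.
Proof.
  induction 1 as [u | u w v n Huw _ IH]; [constructor |].
  replace (S n) with (n + 1) by lia.
  apply walk_app with w; [exact IH |].
  econstructor; [apply adj_sym; exact Huw | constructor].
Qed.

Lemma dist_spec u v :
  walk adj u v (dist adj u v) /\ forall m, walk adj u v m -> dist adj u v <= m.
Proof. unfold dist; apply epsilon_spec, nat_least_witness, conn. Qed.

Lemma dist_le u v m : walk adj u v m -> dist adj u v <= m.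
Proof. apply dist_spec. Qed.

Lemma dist_triangle u v w : dist adj u w <= dist adj u v + dist adj v w.
Proof. apply dist_le, walk_app with v; apply dist_spec. Qed.

Lemma dist_sym u v : dist adj u v = dist adj v u.
Proof. apply Nat.le_antisymm; apply dist_le, walk_rev, dist_spec. Qed.

Lemma dist_adj_le1 u v : adj u v -> dist adj u v <= 1.
Proof. intros H; apply dist_le; econstructor; [exact H | constructor]. Qed.

Section Ray.
Variable u : nat -> V.
Hypothesis u_ray : metric_ray adj u.

Lemma ray_dist_step x k : dist adj (u (S k)) x <= dist adj (u k) x + 1.
Proof.
  destruct u_ray as [_ [Hadj _]].
  pose proof (dist_triangle (u (S k)) (u k) x).
  pose proof (dist_adj_le1 _ _ (adj_sym _ _ (Hadj k))); lia.
Qed.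

(* Since d(u_0,u_k) = k, the distance to x is at least k - d(u_0,x). *)
Lemma ray_dist_lower x k : k <= dist adj (u 0) x + dist adj (u k) x.
Proof.
  destruct u_ray as [_ [_ Hgeo]].
  pose proof (dist_triangle (u 0) x (u k)) as Htri.
  rewrite Hgeo, (dist_sym x (u k)) in Htri; lia.
Qed.

Lemma ray_stable_shift S K j :
  ray_stable adj S u K -> ray_stable adj S u (K + j).
Proof.
  intros H k x Hx; rewrite <- Nat.add_assoc, !(H _ x Hx); lia.
Qed.

(* Some index is stable for all of S: combine the stabilisation points of the
   finitely many vertices of S. *)
Lemma ray_stable_exists S : exists K, ray_stable adj S u K.
Proof.
  induction S as [|a S [K1 H1]]; [exists 0; intros k x [] |].
  destruct (eventually_unit_slope (fun k => dist adj (u k) a) (dist adj (u 0) a)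
              (ray_dist_step a) (ray_dist_lower a)) as [K2 H2].
  exists (K1 + K2); intros k x [<- | Hx].
  - rewrite (Nat.add_comm K1 K2), <- Nat.add_assoc, !H2; lia.
  - exact (ray_stable_shift S K1 K2 H1 k x Hx).
Qed.

Lemma ray_index_stable S : ray_stable adj S u (ray_index adj S u).
Proof.
  unfold ray_index.
  exact (proj1 (epsilon_spec _ _ (nat_least_witness _ (ray_stable_exists S)))).
Qed.

Lemma stable_ray_translate S K n a :
  resolving_set adj S -> ray_stable adj S u K ->
  (forall x, In x S -> dist adj a x = dist adj (u K) x + n) ->
  a = u (K + n).
Proof.
  intros HS Hstab Hshift; apply NNPP; intro Hne.
  destruct (HS _ _ Hne) as [x [Hx Hd]].
  apply Hd; rewrite Hstab, Hshift by exact Hx; reflexivity.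
Qed.

Lemma not_doubly_resolved_on_ray S K a x0 :
  resolving_set adj S -> ray_stable adj S u K -> In x0 S ->
  dist adj (u K) x0 <= dist adj a x0 ->
  ~ (exists x y, In x S /\ In y S /\ doubly_resolves_pair adj x y a (u K)) ->
  a = u (K + (dist adj a x0 - dist adj (u K) x0)).
Proof.
  intros HS Hstab Hx0 Hle Hno.
  pose proof (not_doubly_resolved_constant adj S a (u K) x0 Hno Hx0) as Hconst.
  apply (stable_ray_translate S K); [exact HS | exact Hstab |].
  intros x Hx; specialize (Hconst x Hx); lia.
Qed.

End Ray.
End Metric.

Theorem lemma6 (V : Type) (adj : V -> V -> Prop)
  (Hsimple : simple_graph adj) (Hinf : infinite_graph (V:=V))
  (Hconn : connected adj) (Hlf : locally_finite adj)
  (S : list V) (HS : resolving_set adj S)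
  (I : Type) (ray : I -> nat -> V)
  (Hray : forall i, metric_ray adj (ray i))
  (Hdisj : forall i j, i <> j -> forall k l, ray i k <> ray j l) :
  doubly_resolves adj S
    (fun w => exists i, w = ray i (ray_index adj S (ray i))).
Proof.
  destruct Hsimple as [adj_sym _].
  set (anchor := fun i => ray i (ray_index adj S (ray i))).
  (* Anchors of distinct rays are doubly resolved, once oriented so that anchor j
     is no farther from x0: otherwise anchor i would be a vertex of ray j. *)
  assert (Hcase : forall i j x0, i <> j -> In x0 S ->
            dist adj (anchor j) x0 <= dist adj (anchor i) x0 ->
            exists x y, In x S /\ In y S /\
              doubly_resolves_pair adj x y (anchor i) (anchor j)).
  { intros i j x0 Hij Hx0 Hle; apply NNPP; intro Hno.
    apply (Hdisj i j Hij (ray_index adj S (ray i))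
             (ray_index adj S (ray j)
              + (dist adj (anchor i) x0 - dist adj (anchor j) x0))).
    apply (not_doubly_resolved_on_ray adj (ray j) S);
      auto using ray_index_stable. }
  intros a b [i ->] [j ->] Hab.
  assert (Hij : i <> j) by (intros ->; exact (Hab eq_refl)).
  destruct (HS _ _ Hab) as [x0 [Hx0 _]].
  destruct (le_lt_dec (dist adj (anchor j) x0) (dist adj (anchor i) x0))
    as [Hle | Hlt].
  - exact (Hcase i j x0 Hij Hx0 Hle).
  - destruct (Hcase j i x0 (not_eq_sym Hij) Hx0 (Nat.lt_le_incl _ _ Hlt))
      as [x [y [Hx [Hy Hxy]]]].
    exists x, y; auto using doubly_resolves_pair_sym.
Qed.
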